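(* (Perfect ciphertext blindness of SymmetricBlind against the Decryptor.) In the probabilistic model described in the context, for all $m\in\mathbb{Z}_p$, $c'\in\mathbb{Z}_p$ and $m'\in\mathbb{Z}_p$ with $\Pr[C'=c'\cap M'=m']>0$, $$\Pr[M=m\mid C'=c'\cap M'=m']=\Pr[M=m].$$
   Context: Let $p\ge5$ be a prime; $\mathbb{Z}_n=\{0,\dots,n-1\}$ and $x\bmod n$ is the least nonnegative residue. 2PAD: key $(x_k,y_k)\in\mathbb{Z}_p^2$; encrypting $m\in\mathbb{Z}_p$ with randomness $z\in\mathbb{Z}_p\setminus\{0\}$ gives $c=(p x_k z^2+p y_k z+pm+z)\bmod p^2$; decrypting $c\in\mathbb{Z}_{p^2}$: $z=c\bmod p$, $t=(-p x_k z^2-p y_k z+c)\bmod p^2$, output $(t-z)/p$. Probabilistic model of the blind decryption in the scheme SymmetricBlind with $1\le L\le p-1$: the key $(X,Y)$ has $X,Y$ independent and uniform on $\mathbb{Z}_p$; $M_1,\dots,M_L$ are arbitrary jointly distributed random plaintexts in $\mathbb{Z}_p$; the encryption randomness $(z_1,\dots,z_L)$ consists of pairwise distinct elements of $\mathbb{Z}_p\setminus\{0\}$, each $z_j$ being (marginally) uniform on $\mathbb{Z}_p\setminus\{0\}$ (e.g. $(z_1,\dots,z_L)$ uniform over all tuples of distinct nonzero residues); $C_j$ is the 2PAD encryption of $M_j$ under $(X,Y)$ with randomness $z_j$; Alice's chosen index $I\in\{1,\dots,L\}$ is a random variable; and the three families $(X,Y)$, $(z_1,\dots,z_L)$, $(I,M_1,\dots,M_L)$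 are mutually independent. Alice sends $C'=C_I\bmod p$ to the Decryptor, who replies $M'=\mathrm{Dec}_{2PAD}(X,Y,C')$; Alice's output is $M=((C_I-C'+pM')\bmod p^2)/p$ (which equals $M_I$). (The ciphertexts $C_1,\dots,C_L$ are assumed hidden from the Decryptor.) *)

From HB Require Import structures.
From mathcomp Require Import all_boot all_order all_algebra.
Set Implicit Arguments. Unset Strict Implicit. Unset Printing Implicit Defensive.
Import Order.TTheory GRing.Theory Num.Theory.
Local Open Scope ring_scope.

Definition enc2pad (p : nat) (x y m z : int) : int :=
  ((p%:Z * x * z ^+ 2 + p%:Z * y * z + p%:Z * m + z) %% (p%:Z ^+ 2))%Z.

Definition dec2pad (p : nat) (x y c : int) : int :=
  let z := (c %% p%:Z)%Z in
  let t := ((- (p%:Z * x * z ^+ 2) - p%:Z * y * z + c) %% (p%:Z ^+ 2))%Z in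
  ((t - z) %/ p%:Z)%Z.

Definition zI (p : nat) (a : 'I_p) : int := (nat_of_ord a)%:Z.

(* Sample space: ((key X, key Y), randomness z), (index I, plaintexts M) *)
Notation Omega p L :=
  ((('I_p * 'I_p) * {ffun 'I_L -> 'I_p}) * ('I_L * {ffun 'I_L -> 'I_p}))%type.

Section Model.
Variables (p L : nat).

Definition keyX (om : Omega p L) : int := zI om.1.1.1.
Definition keyY (om : Omega p L) : int := zI om.1.1.2.
Definition rnd (om : Omega p L) (j : 'I_L) : int := zI (om.1.2 j).
Definition idx (om : Omega p L) : 'I_L := om.2.1.
Definition ptxt (om : Omega p L) (j : 'I_L) : int := zI (om.2.2 j).

Definition Cj (om : Omega p L) (j : 'I_L) : int :=
  enc2pad p (keyX om) (keyY om) (ptxt om j) (rnd om j).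
Definition Cprime (om : Omega p L) : int := (Cj om (idx om) %% p%:Z)%Z.
Definition Mprime (om : Omega p L) : int := dec2pad p (keyX om) (keyY om) (Cprime om).
Definition Mout (om : Omega p L) : int :=
  (((Cj om (idx om) - Cprime om + p%:Z * Mprime om) %% (p%:Z ^+ 2))%Z %/ p%:Z)%Z.

Variable R : realFieldType.
(* Dz : distribution of (z_1..z_L); Dm : distribution of (I, M_1..M_L);
   the key is uniform on Z_p^2; the three families are independent. *)
Variables (Dz : {ffun 'I_L -> 'I_p} -> R) (Dm : 'I_L * {ffun 'I_L -> 'I_p} -> R).

Definition weight (om : Omega p L) : R := (p%:R ^+ 2)^-1 * Dz om.1.2 * Dm om.2.

Definition Pr (E : pred (Omega p L)) : R := \sum_(om | E om) weight om.

End Model.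

(** Since [C' = z_I] and Alice's output is [M_I], the event
    [{M = m} ∩ {C' = c'} ∩ {M' = m'}] is [{M_I = m} ∩ {z_I = c'} ∩
    {Dec(X, Y, c') = m'}], whose probability factors over the three
    independent families.  The middle factor [Pr[z_i = c']] is the same for
    every index [i], since all [z_i] share one marginal law, so it does not
    couple with [I] and cancels in the conditional probability. *)
From HB Require Import structures.
From mathcomp Require Import all_boot all_order all_algebra.
From mathcomp Require Import zify ring.
Set Implicit Arguments.
Unset Strict Implicit.
Unset Printing Implicit Defensive.

Import Order.TTheory GRing.Theory Num.Theory.
Local Open Scope ring_scope.

Lemma divzMDl_small (q d r : int) : 0 < d -> 0 <= r < d -> ((q * d + r) %/ d)%Z = q.
Proof.
move=> d_gt0 r_bd; rewrite divzMDl ?gt_eqF // divz_small ?addr0 //.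
by rewrite gez0_abs // ltW.
Qed.

Lemma digit2_bound (d a b : int) : 0 <= a < d -> 0 <= b < d -> 0 <= d * a + b < d ^+ 2.
Proof. by move=> /andP[? ?] /andP[? ?]; apply/andP; split; rewrite ?expr2; nia. Qed.

Lemma modz_mod_sqr (a d : int) : ((a %% d ^+ 2)%Z %% d)%Z = (a %% d)%Z.
Proof. by rewrite {2}(divz_eq a (d ^+ 2)) expr2 mulrA modzMDl. Qed.

Section TwoPad.
Variables (p : nat) (x y : int).
Hypothesis p_gt0 : (0 < p)%N.

Let P := p%:Z.

Let P_gt0 : 0 < P. Proof. by rewrite ltz_nat. Qed.

Lemma enc2pad_modp (m z : int) : 0 <= z < P -> (enc2pad p x y m z %% P)%Z = z.
Proof.
move=> z_bd; rewrite /enc2pad modz_mod_sqr.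
have -> : P * x * z ^+ 2 + P * y * z + P * m + z = (x * z ^+ 2 + y * z + m) * P + z by ring.
by rewrite modzMDl modz_small.
Qed.

Lemma dec2pad_residue (z : int) : 0 <= z < P ->
  dec2pad p x y z = ((- (x * z ^+ 2) - y * z) %% P)%Z.
Proof.
move=> z_bd; rewrite /dec2pad (modz_small z_bd).
set u := - (x * z ^+ 2) - y * z.
have u_bd : 0 <= (u %% P)%Z < P by rewrite modz_ge0 ?gt_eqF ?ltz_pmod.
have -> : - (P * x * z ^+ 2) - P * y * z + z
        = (u %/ P)%Z * P ^+ 2 + (P * (u %% P)%Z + z).
  have -> : - (P * x * z ^+ 2) - P * y * z + z = P * u + z by rewrite /u; ring.
  by rewrite {1}(divz_eq u P); ring.
rewrite modzMDl modz_small ?digit2_bound //.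
by rewrite addrK mulrC mulzK ?gt_eqF.
Qed.

Lemma blind_dec2pad_enc2pad (m z : int) : 0 <= m < P -> 0 <= z < P ->
  let c := enc2pad p x y m z in
  (((c - (c %% P)%Z + P * dec2pad p x y (c %% P)%Z) %% P ^+ 2)%Z %/ P)%Z = m.
Proof.
move=> m_bd z_bd /=; rewrite enc2pad_modp // dec2pad_residue //.
set u := - (x * z ^+ 2) - y * z.
set w := P * x * z ^+ 2 + P * y * z + P * m + z.
have ew : (w %% P ^+ 2)%Z = w - (w %/ P ^+ 2)%Z * P ^+ 2.
  by rewrite {2}(divz_eq w (P ^+ 2)); ring.
have eu : (u %% P)%Z = u - (u %/ P)%Z * P by rewrite {2}(divz_eq u P); ring.
have -> : enc2pad p x y m z - z + P * (u %% P)%Z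
        = (- (w %/ P ^+ 2)%Z - (u %/ P)%Z) * P ^+ 2 + (P * m + 0).
  by rewrite /enc2pad -/P -/w ew eu /w /u; ring.
have pm_bd : 0 <= P * m + 0 < P ^+ 2 by rewrite digit2_bound ?P_gt0 ?lexx.
by rewrite modzMDl modz_small // addr0 mulKz ?gt_eqF.
Qed.

End TwoPad.

Lemma eq_zI (p : nat) (a b : 'I_p) : (zI a == zI b) = (a == b).
Proof. by rewrite /zI eqz_nat. Qed.

Lemma zI_bound (p : nat) (a : 'I_p) : 0 <= zI a < p%:Z.
Proof. by rewrite /zI ltz_nat ltn_ord. Qed.

Section Model.
Context {p L : nat} {R : realFieldType}.
Context {Dz : {ffun 'I_L -> 'I_p} -> R} {Dm : 'I_L * {ffun 'I_L -> 'I_p} -> R}.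

Lemma sum_pair (I J : finType) (f : I * J -> R) :
  \sum_x f x = \sum_i \sum_j f (i, j).
Proof. by rewrite pair_bigA; apply: eq_bigr => -[]. Qed.

Lemma eq_Pr (E F : pred (Omega p L)) : E =1 F -> Pr Dz Dm E = Pr Dz Dm F.
Proof. by move=> eEF; rewrite /Pr (eq_bigl _ _ eEF). Qed.

(* The event on the randomness may depend on the chosen index [I], provided
   its probability [h] does not. *)
Lemma Pr_factor (E : pred ('I_L * {ffun 'I_L -> 'I_p})) (G : pred ('I_p * 'I_p))
    (H : {ffun 'I_L -> 'I_p} -> 'I_L -> bool) (h : R) :
  (forall i, \sum_(z | H z i) Dz z = h) ->
  Pr Dz Dm (fun om => [&& E om.2, G om.1.1 & H om.1.2 om.2.1])
  = (p%:R ^+ 2)^-1 * #|G|%:R * h * \sum_(b | E b) Dm b.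
Proof.
move=> sumH; rewrite /Pr big_mkcond sum_pair /=.
rewrite (@sum_pair ('I_p * 'I_p)%type {ffun 'I_L -> 'I_p}) /=.
under eq_bigr do rewrite exchange_big /=.
rewrite exchange_big big_distrr [RHS]big_mkcond /=; apply: eq_bigr => b _.
case: (E b); last by rewrite big1 // => k _; rewrite big1.
rewrite (eq_bigr (fun k => if G k then (p%:R ^+ 2)^-1 * h * Dm b else 0)); last first.
  move=> k _; case: (G k); last by rewrite big1.
  rewrite -big_mkcond /weight /= -(sumH b.1) big_distrr big_distrl /=.
  by apply: eq_bigr => z _; ring.
by rewrite -big_mkcond sumr_const -mulr_natr; ring.
Qed.

Lemma Cprime_idx (om : Omega p L) : (0 < p)%N -> Cprime om = rnd om (idx om).
Proof. by move=> p_gt0; rewrite /Cprime /Cj enc2pad_modp // zI_bound. Qed.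

Lemma Mout_idx (om : Omega p L) : (0 < p)%N -> Mout om = ptxt om (idx om).
Proof.
move=> p_gt0.
by rewrite /Mout /Mprime /Cprime /Cj blind_dec2pad_enc2pad // zI_bound.
Qed.

Lemma rnd_marginal (i : 'I_L) (c : 'I_p) :
  (forall z : {ffun 'I_L -> 'I_p}, Dz z != 0 -> forall j, nat_of_ord (z j) != 0%N) ->
  (forall (j : 'I_L) (a : 'I_p), nat_of_ord a != 0%N ->
     \sum_(z : {ffun 'I_L -> 'I_p} | z j == a) Dz z = (p.-1)%:R^-1) ->
  \sum_(z : {ffun 'I_L -> 'I_p} | z i == c) Dz z = if nat_of_ord c == 0%N then 0 else (p.-1)%:R^-1.
Proof.
move=> nonzero uniform; case: ifP => c0; last by rewrite uniform ?c0.
rewrite big1 // => z /eqP zi; apply/eqP; apply: contraT => Dz_z.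
by have := nonzero z Dz_z i; rewrite zi c0.
Qed.

End Model.

Theorem proposition3 (p L : nat) (R : realFieldType)
  (Dz : {ffun 'I_L -> 'I_p} -> R) (Dm : 'I_L * {ffun 'I_L -> 'I_p} -> R) :
  prime p -> (5 <= p)%N -> (1 <= L)%N -> (L <= p.-1)%N ->
  (forall z, 0 <= Dz z) -> \sum_(z : {ffun 'I_L -> 'I_p}) Dz z = 1 ->
  (forall z : {ffun 'I_L -> 'I_p}, Dz z != 0 ->
     (forall j, nat_of_ord (z j) != 0%N) /\ (forall j k, j != k -> z j != z k)) ->
  (forall (j : 'I_L) (a : 'I_p), nat_of_ord a != 0%N ->
     \sum_(z : {ffun 'I_L -> 'I_p} | z j == a) Dz z = (p.-1)%:R^-1) ->
  (forall im, 0 <= Dm im) -> \sum_im Dm im = 1 ->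
  forall m c' m' : 'I_p,
    let A := fun om => (Cprime om == zI c') && (Mprime om == zI m') in
    0 < Pr Dz Dm A ->
    Pr Dz Dm (fun om => (Mout om == zI m) && A om) / Pr Dz Dm A
    = Pr Dz Dm (fun om => Mout om == zI m).
Proof.
move=> p_prime _ _ _ _ Dz1 supp uniform _ Dm1 m c' m' A PA.
have p_gt0 := prime_gt0 p_prime.
set G := fun k : 'I_p * 'I_p => dec2pad p (zI k.1) (zI k.2) (zI c') == zI m'.
set E := fun b : 'I_L * {ffun 'I_L -> 'I_p} => b.2 b.1 == m.
set h := if nat_of_ord c' == 0%N then 0 else (p.-1)%:R^-1 : R.
have sum_rnd (i : 'I_L) : \sum_(z : {ffun 'I_L -> 'I_p} | z i == c') Dz z = h.
  by apply: rnd_marginal => // z /supp[].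
have view om : A om = [&& true, G om.1.1 & om.1.2 om.2.1 == c'].
  by rewrite /A /Mprime Cprime_idx // /rnd eq_zI; case: eqP => [->|]; rewrite /= ?andbT ?andbF.
have PrA : Pr Dz Dm A = (p%:R ^+ 2)^-1 * #|G|%:R * h.
  by rewrite (eq_Pr view) (Pr_factor xpredT G sum_rnd) Dm1 mulr1.
have PrMA : Pr Dz Dm (fun om => (Mout om == zI m) && A om)
    = (p%:R ^+ 2)^-1 * #|G|%:R * h * \sum_(b | E b) Dm b.
  rewrite -(Pr_factor E G sum_rnd); apply: eq_Pr => om.
  by rewrite view Mout_idx // eq_zI.
have PrM : Pr Dz Dm (fun om => Mout om == zI m) = \sum_(b | E b) Dm b.
  rewrite (eq_Pr (F := fun om => [&& E om.2, xpredT om.1.1 & true])); last first.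
    by move=> om; rewrite Mout_idx // eq_zI /= andbT.
  rewrite (Pr_factor E xpredT (H := fun _ _ => true) (fun=> Dz1)).
  rewrite (eq_card_prod (fun=> erefl)) card_ord natrM -expr2.
  by rewrite mulVf ?mul1r ?mulr1 // expf_neq0 // pnatr_eq0 -lt0n.
have PrA_neq0 : (p%:R ^+ 2)^-1 * #|G|%:R * h != 0 by rewrite -PrA gt_eqF.
by rewrite PrMA PrM PrA mulrC mulKf.
Qed.
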